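(* For all pure states $\rho,\omega\in\mathcal{P}_1(\mathbb{C}^2)$ one has $D_{\mathrm{sym}}^2(\rho,\omega)=6-2\langle\mathbf{b}_\rho,\mathbf{b}_\omega\rangle$, $D_{\mathrm{sym}}^2(\rho,\rho)=4$, and consequently $d_{\mathrm{sym}}(\rho,\omega)=|\mathbf{b}_\rho-\mathbf{b}_\omega|$, where $\langle\cdot,\cdot\rangle$ and $|\cdot|$ are the Euclidean inner product and norm on $\mathbb{R}^3$.
   Context: Let $\mathcal{H}=\mathbb{C}^2$, $\mathcal{H}^*$ its dual space. $\mathcal{S}(\mathcal{H})$ is the set of density operators on $\mathcal{H}$; $\mathcal{P}_1(\mathcal{H})$ is the set of pure states (rank-one orthogonal projections). For a linear operator $A$ on $\mathcal{H}$, its transpose $A^T$ is the operator on $\mathcal{H}^*$ defined by $(A^T\varphi)(x)=\varphi(Ax)$. For $\rho,\omega\in\mathcal{S}(\mathcal{H})$, $\mathcal{C}(\rho,\omega)=\{\Pi\in\mathcal{S}(\mathcal{H}\otimes\mathcal{H}^* ):\ \mathrm{tr}_{\mathcal{H}^*}[\Pi]=\omega,\ \mathrm{tr}_{\mathcal{H}}[\Pi]=\rho^T\}$. The Pauli matrices are $\sigma_1=\begin{bmatrix}0&1\\1&0\end{bmatrix}$, $\sigma_2=\begin{bmatrix}0&-i\\i&0\end{bmatrix}$, $\sigma_3=\begin{bmatrix}1&0\\0&-1\end{bmatrix}$. $C_{\mathrm{sym}}=\sum_{j=1}^3(\sigma_j\otimes I^T-I\otimes\sigma_j^T)^2$, $D_{\mathrm{sym}}^2(\rho,\omega)=\inf\{\mathrm{tr}[\Pi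 C_{\mathrm{sym}}]:\Pi\in\mathcal{C}(\rho,\omega)\}$, and $d_{\mathrm{sym}}(\rho,\omega)=\big(D_{\mathrm{sym}}^2(\rho,\omega)-\tfrac12(D_{\mathrm{sym}}^2(\rho,\rho)+D_{\mathrm{sym}}^2(\omega,\omega))\big)^{1/2}$. The Bloch vector of $\rho$ is $\mathbf{b}_\rho=(\mathrm{tr}[\sigma_j\rho])_{j=1}^3$. *)

From mathcomp Require Import all_boot all_order all_algebra.
From mathcomp Require Import classical_sets reals.
From mathcomp Require Export complex mxtens.
Set Implicit Arguments. Unset Strict Implicit. Unset Printing Implicit Defensive.
Import GRing.Theory Num.Theory.
Local Open Scope ring_scope.
Local Open Scope complex_scope.

Section QDefs.
Variable R : realType.
Local Notation C := R[i].

Definition adj {m n : nat} (A : 'M[C]_(m, n)) : 'M[C]_(n, m) :=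
  (map_mx (fun z : C => z^*) A)^T.

Definition psd {n : nat} (A : 'M[C]_n) : Prop :=
  adj A = A /\ forall v : 'cV[C]_n, 0 <= (adj v *m A *m v) 0 0.

Definition density {n : nat} (A : 'M[C]_n) : Prop := psd A /\ \tr A = 1.

Definition pure {n : nat} (P : 'M[C]_n) : Prop :=
  adj P = P /\ P *m P = P /\ \rank P = 1%N.

(* H (x) H^* with H = C^2 is represented as C^(2*2) via the Kronecker
   product [*t]; H^* is identified with C^2 through the dual basis, in which
   the transpose operator A^T has the transposed matrix. *)

Definition ptr2 (P : 'M[C]_(2 * 2)) : 'M[C]_2 :=
  \matrix_(a < 2, b < 2)
    \sum_(k < 2) P (mxtens_index (a, k)) (mxtens_index (b, k)).

Definition ptr1 (P : 'M[C]_(2 * 2)) : 'M[C]_2 :=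
  \matrix_(a < 2, b < 2)
    \sum_(k < 2) P (mxtens_index (k, a)) (mxtens_index (k, b)).

Definition coupling (rho omega : 'M[C]_2) (P : 'M[C]_(2 * 2)) : Prop :=
  density P /\ ptr2 P = omega /\ ptr1 P = rho^T.

Definition sigma1 : 'M[C]_2 :=
  \matrix_(a < 2, b < 2) (if a == b then 0 else 1).
Definition sigma2 : 'M[C]_2 :=
  \matrix_(a < 2, b < 2)
    (if a == b then 0 else if (a : nat) == 0%N then - 'i else 'i).
Definition sigma3 : 'M[C]_2 :=
  \matrix_(a < 2, b < 2)
    (if a == b then (if (a : nat) == 0%N then 1 else -1) else 0).
Definition pauli (j : 'I_3) : 'M[C]_2 :=
  if (j : nat) == 0%N then sigma1 else if (j : nat) == 1%N then sigma2
  else sigma3.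

Definition Csym : 'M[C]_(2 * 2) :=
  \sum_(j < 3)
    let X := pauli j *t (1%:M : 'M[C]_2)^T - (1%:M : 'M[C]_2) *t (pauli j)^T in
    X *m X.

(* D_sym^2(rho, omega) = inf { tr[Pi C_sym] : Pi in C(rho, omega) }
   (tr[Pi C_sym] is real; we take its real part) *)
Definition Dsym2 (rho omega : 'M[C]_2) : R :=
  inf [set x : R | exists P, coupling rho omega P /\
                              x = complex.Re (\tr (P *m Csym))].

Definition dsym (rho omega : 'M[C]_2) : R :=
  Num.sqrt (Dsym2 rho omega - (Dsym2 rho rho + Dsym2 omega omega) / 2).

Definition bloch (rho : 'M[C]_2) (j : 'I_3) : R :=
  complex.Re (\tr (pauli j *m rho)).

End QDefs.

(* For pure states the coupling problem is rigid.  If [Pi] couples [rho] and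
   [omega], then [tr (Pi (omega (x) 1)) = tr (omega omega) = 1 = tr Pi]; as [Pi] is
   positive and [omega (x) 1] is a projection this forces [Pi (omega (x) 1) = Pi],
   and likewise for [1 (x) rho^T].  So [Pi] is squeezed between two copies of the
   rank-one projection [omega (x) rho^T], and [tr (Pi (A (x) B))] factorizes as
   [tr (omega A) tr (rho^T B)], exactly as for the product coupling.  Since
   [C_sym = 6 - 2 sum_j sigma_j (x) sigma_j^T], every coupling costs
   [6 - 2 <b_rho, b_omega>].  Pure states have unit Bloch vectors, because
   [sum_j tr (sigma_j A)^2 = 2 tr (A^2) - (tr A)^2] for 2x2 matrices; hence
   [d_sym^2 = 2 - 2 <b_rho, b_omega> = |b_rho - b_omega|^2]. *)

From mathcomp Require Import all_boot all_order all_algebra.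
From mathcomp Require Import classical_sets reals complex mxtens ring lra.
Set Implicit Arguments. Unset Strict Implicit. Unset Printing Implicit Defensive.
Import Order.TTheory GRing.Theory Num.Theory.
Local Open Scope ring_scope.
Local Open Scope complex_scope.

Lemma mxrank1_factor (F : fieldType) m n (A : 'M[F]_(m, n)) :
  \rank A = 1%N -> exists (u : 'cV[F]_m) (v : 'rV[F]_n), A = u *m v.
Proof.
move=> rk1; move: (mulmx_base A); move: (col_base A) (row_base A).
by rewrite rk1 => u v <-; exists u, v.
Qed.

Lemma mxtrace11 (F : fieldType) (A : 'M[F]_1) : \tr A = A 0 0.
Proof. by rewrite /mxtrace big_ord1. Qed.

Lemma big_mxtens_index (V : nmodType) m n (F : 'I_(m * n) -> V) :
  \sum_(k < m * n) F k = \sum_(i < m) \sum_(j < n) F (mxtens_index (i, j)).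
Proof.
rewrite pair_big /= (reindex (@mxtens_index m n)) /=; first by apply: eq_bigr=> -[].
by exists (@mxtens_unindex m n)=> k _; rewrite (mxtens_indexK, mxtens_unindexK).
Qed.

Section Tensor.
Variable R : comPzRingType.
Implicit Types (m n p q : nat).

Lemma tensmxZ m n p q a b (A : 'M[R]_(m, n)) (B : 'M[R]_(p, q)) :
  (a *: A) *t (b *: B) = (a * b) *: (A *t B).
Proof.
apply/matrixP=> i j; case: (mxtens_indexP i)=> i0 i1; case: (mxtens_indexP j)=> j0 j1.
by rewrite !mxE !mxtens_indexK /= mulrACA.
Qed.

Lemma tens1mx1 m n : (1%:M : 'M[R]_m) *t (1%:M : 'M[R]_n) = 1%:M.
Proof.
apply/matrixP=> i j; case: (mxtens_indexP i)=> i0 i1; case: (mxtens_indexP j)=> j0 j1.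
rewrite tensmxE !mxE (inj_eq (can_inj (@mxtens_indexK m n))) xpair_eqE.
by case: (i0 == j0); case: (i1 == j1); rewrite /= ?mulr1 ?mulr0.
Qed.

Lemma mxtrace_tens m n (A : 'M[R]_m) (B : 'M[R]_n) : \tr (A *t B) = \tr A * \tr B.
Proof.
rewrite /mxtrace big_mxtens_index mulr_suml; apply: eq_bigr=> i _.
by rewrite mulr_sumr; apply: eq_bigr=> j _; rewrite tensmxE.
Qed.

End Tensor.

Section Adjoint.
Variable R : realType.
Local Notation C := R[i].
Implicit Types (m n p : nat).

Lemma adjK m n (A : 'M[C]_(m, n)) : adj (adj A) = A.
Proof. by apply/matrixP=> i j; rewrite !mxE conjcK. Qed.

Lemma adjM m n p (A : 'M[C]_(m, n)) (B : 'M[C]_(n, p)) :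
  adj (A *m B) = adj B *m adj A.
Proof.
apply/matrixP=> i j; rewrite !mxE rmorph_sum; apply: eq_bigr=> k _.
by rewrite !mxE rmorphM mulrC.
Qed.

Lemma adjB m n (A B : 'M[C]_(m, n)) : adj (A - B) = adj A - adj B.
Proof. by apply/matrixP=> i j; rewrite !mxE rmorphB. Qed.

Lemma adj_scale m n (c : C) (A : 'M[C]_(m, n)) : adj (c *: A) = c^* *: adj A.
Proof. by apply/matrixP=> i j; rewrite !mxE rmorphM. Qed.

Lemma adj1mx n : adj (1%:M : 'M[C]_n) = 1%:M.
Proof. by apply/matrixP=> i j; rewrite !mxE eq_sym conjc_nat. Qed.

Lemma adj_tr m n (A : 'M[C]_(m, n)) : adj A^T = (adj A)^T.
Proof. by apply/matrixP=> i j; rewrite !mxE. Qed.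

Lemma adj_delta m n (i : 'I_m) (j : 'I_n) :
  adj (delta_mx i j : 'M[C]_(m, n)) = delta_mx j i.
Proof. by apply/matrixP=> a b; rewrite !mxE conjc_nat andbC. Qed.

Lemma adj_tens m n p q (A : 'M[C]_(m, n)) (B : 'M[C]_(p, q)) :
  adj (A *t B) = adj A *t adj B.
Proof.
apply/matrixP=> i j.
case: (mxtens_indexP i)=> i0 i1; case: (mxtens_indexP j)=> j0 j1.
by rewrite tensmxE !mxE !mxtens_indexK /= rmorphM.
Qed.

Lemma mxtrace_adj n (A : 'M[C]_n) : \tr (adj A) = (\tr A)^*.
Proof.
rewrite /adj mxtrace_tr /mxtrace rmorph_sum.
by apply: eq_bigr=> k _; rewrite mxE.
Qed.

End Adjoint.

Section Positivity.
Variable R : realType.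
Local Notation C := R[i].
Variable n : nat.
Implicit Types (A P M : 'M[C]_n) (z : 'cV[C]_n).

Definition proj M := adj M = M /\ M *m M = M.

(* Perturbing [z] to [(a + 1) z - s e_l], with [s = (A z)_l] and [a = e_l^* A e_l],
   gives the value [-(a + 2) |s|^2] of the form, which is nonnegative only if [s = 0]. *)
Lemma psd_form_eq0 A z : psd A -> (adj z *m A *m z) 0 0 = 0 -> A *m z = 0.
Proof.
case=> A_herm A_ge0 Az0; apply/matrixP=> l j; rewrite [j]ord1 [RHS]mxE.
set s := (A *m z) l 0; pose e : 'cV[C]_n := delta_mx l 0.
set a := (adj e *m A *m e) 0 0.
have eAz : (adj e *m A *m z) 0 0 = s by rewrite adj_delta -mulmxA -rowE mxE.
have zAe : (adj z *m A *m e) 0 0 = s^*.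
  have adj11 (X : 'M[C]_1) : (X 0 0)^* = adj X 0 0 by rewrite !mxE.
  by rewrite -eAz adj11 !adjM adjK A_herm mulmxA.
have a_ge0 : 0 <= a by apply: A_ge0.
pose x := (a + 1) *: z - s *: e.
have form_x : (adj x *m A *m x) 0 0 = - ((a + 2%:R) * (s * s^*)).
  rewrite adjB !adj_scale !mulmxBl !mulmxBr -!scalemxAl -!scalemxAr.
  move: Az0 eAz zAe; rewrite -/a; set zz := adj z *m A *m z.
  set ez := adj e *m A *m z; set ze := adj z *m A *m e; set ee := adj e *m A *m e.
  have eea : ee 0 0 = a by [].
  clearbody zz ez ze ee => Az0 eAz zAe.
  rewrite !mxE Az0 eAz zAe eea geC0_conj ?addr_ge0 //; ring.
have := A_ge0 x; rewrite form_x oppr_ge0 pmulr_rle0 ?ltr_wpDl ?ltr0n // => s_le0.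
have : s * s^* == 0 by rewrite eq_le s_le0 mulcJ_ge0.
by rewrite mulf_eq0 conjc_eq0 orbb => /eqP.
Qed.

Lemma proj_psd M : proj M -> psd M.
Proof.
case=> M_herm M_idem; split=> // v.
have -> : adj v *m M *m v = adj (M *m v) *m (M *m v).
  by rewrite adjM M_herm -[in LHS]M_idem !mulmxA.
rewrite mxE; apply: sumr_ge0 => k _; rewrite !mxE mulrC; exact: mulcJ_ge0.
Qed.

Lemma projC M : proj M -> proj (1%:M - M).
Proof.
case=> M_herm M_idem; split; first by rewrite adjB adj1mx M_herm.
by rewrite mulmxBl !mulmxBr !mul1mx mulmx1 M_idem subrr subr0.
Qed.

(* The diagonal entries of [M^* P M] are the values of the form of [P] on the
   columns of [M]: nonnegative, and summing to [tr (P M) = 0]. *)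
Lemma psd_proj_mul_eq0 P M : psd P -> proj M -> \tr (P *m M) = 0 -> P *m M = 0.
Proof.
move=> P_psd [M_herm M_idem] trPM0.
have diag k : (adj M *m P *m M) k k = (adj (col k M) *m P *m col k M) 0 0.
  rewrite !mxE; apply: eq_bigr=> l _; rewrite !mxE; congr (_ * _).
  by apply: eq_bigr=> p _; rewrite !mxE.
have form0 k : (adj (col k M) *m P *m col k M) 0 0 = 0.
  have trMPM0 : \tr (adj M *m P *m M) = 0.
    by rewrite M_herm mxtrace_mulC mulmxA M_idem mxtrace_mulC.
  rewrite -diag; apply: (psumr_eq0P _ trMPM0) => // i _.
  by rewrite diag; case: P_psd => _; apply.
apply/matrixP=> i k; rewrite [RHS]mxE.
have /matrixP/(_ i 0) := @psd_form_eq0 _ _ P_psd (form0 k).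
by rewrite colE mulmxA -colE !mxE.
Qed.

Lemma psd_proj_mul_id P M : psd P -> proj M -> \tr (P *m M) = \tr P -> P *m M = P.
Proof.
move=> P_psd M_proj trPM.
have : P *m (1%:M - M) = 0.
  apply: psd_proj_mul_eq0 => //; first exact: projC.
  by rewrite mulmxBr mulmx1 raddfB /= trPM subrr.
by rewrite mulmxBr mulmx1 => /eqP; rewrite subr_eq0 => /eqP <-.
Qed.

Lemma proj1mx : proj (1%:M : 'M[C]_n).
Proof. by split; rewrite ?adj1mx ?mulmx1. Qed.

End Positivity.

Lemma proj_tens (R : realType) m n (A : 'M[R[i]]_m) (B : 'M[R[i]]_n) :
  proj A -> proj B -> proj (A *t B).
Proof.
by case=> A_herm A_idem [B_herm B_idem]; split; rewrite ?adj_tens ?A_herm ?B_herm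
  // tensmx_mul A_idem B_idem.
Qed.

Section PureStates.
Variable R : realType.
Local Notation C := R[i].
Variable n : nat.
Implicit Types (A P : 'M[C]_n).

Lemma pure_proj P : pure P -> proj P.
Proof. by case=> P_herm [P_idem _]. Qed.

Lemma pure_trmx P : pure P -> pure P^T.
Proof.
case=> P_herm [P_idem P_rk].
by split; [rewrite adj_tr P_herm | rewrite -trmx_mul P_idem mxrank_tr].
Qed.

Lemma pure_factor P : pure P ->
  exists (u : 'cV[C]_n) (v : 'rV[C]_n), P = u *m v /\ v *m u = 1%:M.
Proof.
case=> _ [P_idem P_rk]; have [u [v P_uv]] := mxrank1_factor P_rk.
exists u, v; split => //.
have P_neq0 : P != 0 by apply: contra_eqN P_rk => /eqP ->; rewrite mxrank0.
move: P_idem; rewrite P_uv mulmxA -(mulmxA u v u) [v *m u]mx11_scalar.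
rewrite mul_mx_scalar -scalemxAl -P_uv => /eqP; rewrite -subr_eq0 -{2}[P]scale1r.
by rewrite -scalerBl scaler_eq0 (negbTE P_neq0) orbF subr_eq0 => /eqP ->.
Qed.

Lemma mxtrace_pure P : pure P -> \tr P = 1.
Proof.
case/pure_factor=> u [v [-> vu1]].
by rewrite mxtrace_mulC vu1 mxtrace11 mxE.
Qed.

Lemma mxtrace_pure_sqr P : pure P -> \tr (P *m P) = 1.
Proof. by move=> P_pure; case: (P_pure) => _ [-> _]; apply: mxtrace_pure. Qed.

Lemma pure_sandwich P A : pure P -> P *m A *m P = \tr (P *m A) *: P.
Proof.
case/pure_factor=> u [v [-> _]].
rewrite -(mulmxA u) mxtrace_mulC mxtrace11.
have -> : u *m (v *m A) *m (u *m v) = u *m (v *m A *m u) *m v by rewrite !mulmxA.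
by rewrite [v *m A *m u]mx11_scalar mul_mx_scalar -scalemxAl [in RHS]mxE mulr1n.
Qed.

End PureStates.

Section PartialTrace.
Variable R : realType.
Local Notation C := R[i].
Implicit Types (A B : 'M[C]_2) (P : 'M[C]_(2 * 2)).

Lemma ptr2_tens A B : ptr2 (A *t B) = \tr B *: A.
Proof.
apply/matrixP=> a b; rewrite !mxE /mxtrace mulr_suml; apply: eq_bigr=> k _.
by rewrite tensmxE mulrC.
Qed.

Lemma ptr1_tens A B : ptr1 (A *t B) = \tr A *: B.
Proof.
apply/matrixP=> a b; rewrite !mxE /mxtrace mulr_suml; apply: eq_bigr=> k _.
by rewrite tensmxE.
Qed.

Lemma mxtrace_mul_tensmx1 P A : \tr (P *m (A *t 1%:M)) = \tr (A *m ptr2 P).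
Proof.
rewrite /mxtrace !big_mxtens_index !big_ord_recl !big_ord0 !mxE !big_mxtens_index.
rewrite !big_ord_recl !big_ord0 !tensmxE !mxE !big_ord_recl !big_ord0 /=.
ring.
Qed.

Lemma mxtrace_mul_tens1mx P B : \tr (P *m (1%:M *t B)) = \tr (B *m ptr1 P).
Proof.
rewrite /mxtrace !big_mxtens_index !big_ord_recl !big_ord0 !mxE !big_mxtens_index.
rewrite !big_ord_recl !big_ord0 !tensmxE !mxE !big_ord_recl !big_ord0 /=.
ring.
Qed.

End PartialTrace.

Section PureCoupling.
Variable R : realType.
Local Notation C := R[i].
Variables rho omega : 'M[C]_2.
Hypotheses (rho_pure : pure rho) (omega_pure : pure omega).

Lemma coupling_pure_mulr P : coupling rho omega P ->
  P *m (omega *t 1%:M) = P /\ P *m (1%:M *t rho^T) = P.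
Proof.
case=> -[P_psd trP1] [ptr2P ptr1P]; split; apply: psd_proj_mul_id => //.
- by apply: proj_tens; [apply: pure_proj | apply: proj1mx].
- by rewrite mxtrace_mul_tensmx1 ptr2P trP1 mxtrace_pure_sqr.
- by apply: proj_tens; [apply: proj1mx | apply: pure_proj; apply: pure_trmx].
- by rewrite mxtrace_mul_tens1mx ptr1P trP1 (mxtrace_pure_sqr (pure_trmx rho_pure)).
Qed.

Lemma coupling_pure_mxtrace_tens P A B : coupling rho omega P ->
  \tr (P *m (A *t B)) = \tr (omega *m A) * \tr (rho^T *m B).
Proof.
move=> P_coupling; have [P_omega P_rhoT] := coupling_pure_mulr P_coupling.
case: P_coupling => -[[P_herm _] trP1] _.
have [[omega_herm _] [rhoT_herm _]] :=
  (pure_proj omega_pure, pure_proj (pure_trmx rho_pure)).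
have lmul X : adj X = X -> P *m X = P -> X *m P = P.
  by move=> X_herm PX; rewrite -[LHS]adjK adjM P_herm X_herm PX P_herm.
set X := omega *t rho^T.
have X_split : X = (omega *t 1%:M) *m (1%:M *t rho^T).
  by rewrite tensmx_mul mulmx1 mul1mx.
have PX : P *m X = P by rewrite X_split mulmxA P_omega P_rhoT.
have XP : X *m P = P.
  by rewrite X_split -mulmxA !lmul // adj_tens ?omega_herm ?rhoT_herm adj1mx.
rewrite -{1}XP -{1}PX mxtrace_mulC mulmxA mxtrace_mulC -mulmxA /X !tensmx_mul.
rewrite mulmxA (mulmxA rho^T) (pure_sandwich A omega_pure).
rewrite (pure_sandwich B (pure_trmx rho_pure)) tensmxZ -scalemxAr.
by rewrite mxtraceZ PX trP1 mulr1.
Qed.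

End PureCoupling.

Section Pauli.
Variable R : realType.
Local Notation C := R[i].
Local Notation sigma := (pauli R).

Lemma pauli_herm j : adj (sigma j) = sigma j.
Proof.
apply/matrixP=> -[[|[|//]] ?] -[[|[|//]] ?].
all: case: j => -[|[|[|//]]] ? /=; rewrite /pauli !mxE /=.
all: by apply/eqP; rewrite eq_complex /= ?oppr0 ?opprK ?eqxx.
Qed.

Lemma pauli_sqr j : sigma j *m sigma j = 1%:M.
Proof.
apply/matrixP=> -[[|[|//]] ?] -[[|[|//]] ?].
all: case: j => -[|[|[|//]]] ? /=; rewrite /pauli !mxE !big_ord_recl big_ord0 !mxE /=.
all: apply/eqP; rewrite eq_complex /=.
all: by rewrite !(mul0r, mulr0, mul1r, mulr1, mulrN, mulNr, oppr0, subr0, add0r, addr0, opprK)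
  ?eqxx.
Qed.

Lemma sum_mxtrace_pauli_sqr (A : 'M[C]_2) :
  \sum_(j < 3) (\tr (sigma j *m A)) ^+ 2 = 2%:R * \tr (A *m A) - (\tr A) ^+ 2.
Proof.
have ii : 'i%C * 'i%C = -1 :> C by rewrite -expr2 sqr_i.
rewrite !big_ord_recl big_ord0 /pauli /mxtrace !big_ord_recl !big_ord0 !mxE /=.
rewrite !big_ord_recl !big_ord0 !mxE /=.
(* [ring] rejects [Num.imaginary] (used in [sigma2]); unfold it to ['i%C]. *)
rewrite (_ : Num.imaginary = 'i%C) //; ring: ii.
Qed.

Lemma Csym_pauli :
  Csym R = 6%:R *: 1%:M - 2%:R *: \sum_(j < 3) sigma j *t (sigma j)^T.
Proof.
have term j : let X := sigma j *t (1%:M : 'M[C]_2)^T - 1%:M *t (sigma j)^T in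
    X *m X = 2%:R *: 1%:M - 2%:R *: (sigma j *t (sigma j)^T).
  rewrite /= trmx1 mulmxBl !mulmxBr !tensmx_mul !mulmx1 !mul1mx -trmx_mul pauli_sqr.
  by rewrite trmx1 tens1mx1 opprB -scalerBr scaler_nat mulr2n.
rewrite /Csym (eq_bigr _ (fun j _ => term j)) sumrB sumr_const card_ord.
by rewrite -scaler_sumr -[_ *+ 3]scaler_nat scalerA -natrM.
Qed.

End Pauli.

Section Bloch.
Variable R : realType.
Local Notation C := R[i].
Local Notation sigma := (pauli R).

Lemma conjc_fixed_real (z : C) : z^* = z -> z = (complex.Re z)%:C.
Proof. by case: z => x y [/= y0]; congr (_ +i* _); lra. Qed.

Lemma mxtrace_pauli_herm j (A : 'M[C]_2) :
  adj A = A -> \tr (sigma j *m A) = (bloch A j)%:C.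
Proof.
move=> A_herm; apply: conjc_fixed_real.
by rewrite -mxtrace_adj adjM A_herm pauli_herm mxtrace_mulC.
Qed.

Lemma sum_bloch_sqr_pure (rho : 'M[C]_2) :
  pure rho -> \sum_(j < 3) bloch rho j ^+ 2 = 1.
Proof.
move=> rho_pure; have [rho_herm _] := pure_proj rho_pure.
apply: (@complexI R); rewrite rmorph_sum /=.
under eq_bigr do rewrite rmorphXn /= -mxtrace_pauli_herm //.
rewrite sum_mxtrace_pauli_sqr mxtrace_pure_sqr // mxtrace_pure //.
by rewrite expr1n mulr1 [2%:R]mulr2n addrK.
Qed.

End Bloch.

Section PureCost.
Variable R : realType.
Local Notation C := R[i].
Variables rho omega : 'M[C]_2.
Hypotheses (rho_pure : pure rho) (omega_pure : pure omega).

Lemma coupling_pure_cost P : coupling rho omega P ->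
  complex.Re (\tr (P *m Csym R)) = 6 - 2 * \sum_(j < 3) bloch rho j * bloch omega j.
Proof.
move=> P_coupling.
have [[rho_herm _] [omega_herm _]] := (pure_proj rho_pure, pure_proj omega_pure).
have pauli_term j : \tr (P *m (pauli R j *t (pauli R j)^T))
    = (bloch rho j * bloch omega j)%:C.
  rewrite (coupling_pure_mxtrace_tens rho_pure omega_pure _ _ P_coupling).
  rewrite -trmx_mul mxtrace_tr mxtrace_mulC.
  by rewrite !mxtrace_pauli_herm // -rmorphM mulrC.
have [[_ trP1] _] := P_coupling.
rewrite Csym_pauli mulmxBr -!scalemxAr mulmx1 mulmx_sumr raddfB /= !mxtraceZ trP1.
rewrite raddf_sum /= (eq_bigr _ (fun j _ => pauli_term j)) -rmorph_sum mulr1.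
rewrite -(rmorph_nat (real_complex R) 6) -(rmorph_nat (real_complex R) 2).
by rewrite -rmorphM -rmorphB.
Qed.

Lemma product_coupling_pure : coupling rho omega (omega *t rho^T).
Proof.
have trT : \tr rho^T = 1 by rewrite mxtrace_tr mxtrace_pure.
split; [split|split].
- apply/proj_psd/proj_tens; apply: pure_proj => //; exact: pure_trmx.
- by rewrite mxtrace_tens mxtrace_pure // trT mulr1.
- by rewrite ptr2_tens trT scale1r.
- by rewrite ptr1_tens mxtrace_pure // scale1r.
Qed.

Lemma Dsym2_pure :
  Dsym2 rho omega = 6 - 2 * \sum_(j < 3) bloch rho j * bloch omega j.
Proof.
rewrite /Dsym2; set v := 6 - _.
rewrite (_ : [set x | _]%classic = [set v]%classic) ?inf1 //.
apply/seteqP; split=> x /=.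
- by case=> P [P_coupling ->]; apply: coupling_pure_cost.
- move=> ->; exists (omega *t rho^T); split; first exact: product_coupling_pure.
  by rewrite coupling_pure_cost //; apply: product_coupling_pure.
Qed.

End PureCost.

Theorem mainTheorem3 (R : realType) (rho omega : 'M[R[i]]_2) :
  pure rho -> pure omega ->
  [/\ Dsym2 rho omega = 6 - 2 * \sum_(j < 3) bloch rho j * bloch omega j,
      Dsym2 rho rho = 4
    & dsym rho omega = Num.sqrt (\sum_(j < 3) (bloch rho j - bloch omega j) ^+ 2)].
Proof.
move=> rho_pure omega_pure.
have norm1 sigma : pure sigma -> \sum_(j < 3) bloch sigma j * bloch sigma j = 1.
  by move/sum_bloch_sqr_pure => <-; apply: eq_bigr => j _; rewrite expr2.
split; [exact: Dsym2_pure | by rewrite Dsym2_pure // norm1 //; lra |].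
rewrite /dsym !Dsym2_pure //; congr Num.sqrt.
transitivity (\sum_(j < 3) bloch rho j * bloch rho j
  + \sum_(j < 3) bloch omega j * bloch omega j
  - 2 * \sum_(j < 3) bloch rho j * bloch omega j).
  by rewrite !norm1 //; lra.
by rewrite !big_ord_recl !big_ord0; ring.
Qed.
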